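(* Let $B\in\mathbb R^{n\times m}$, let $T_{\mathcal U}$ be a symmetric positive definite $m\times m$ matrix, and let $f:\mathbb R^m\to\mathbb R$ be differentiable with $f\in\mathcal S^{1,1}_{\mu_{f,T_{\mathcal U}},L_{f,T_{\mathcal U}}}$ with respect to $T_{\mathcal U}$. For $u_1,u_2\in\mathbb R^m$, $p_1,p_2\in\mathbb R^n$, let $v_i=u_i+T_{\mathcal U}^{-1}B^\top p_i$. Then $$\big(\nabla f(u_1)-\nabla f(u_2),T_{\mathcal U}^{-1}B^\top(p_1-p_2)\big)\ge\frac{\mu_{f,T_{\mathcal U}}}{2}\|v_1-v_2\|^2_{T_{\mathcal U}}-\frac{L_{f,T_{\mathcal U}}}{2}\|B^\top(p_1-p_2)\|^2_{T_{\mathcal U}^{-1}}-\frac12\big(\nabla f(u_1)-\nabla f(u_2),u_1-u_2\big).$$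
   Context: For SPD $M$, $\|x\|_M=(Mx,x)^{1/2}$; $D_f(y,x)=f(y)-f(x)-(\nabla f(x),y-x)$; $f\in\mathcal S^{1,1}_{\mu_{f,M},L_{f,M}}$ w.r.t. $M$ means $\frac{\mu_{f,M}}2\|x-y\|_M^2\le D_f(y,x)\le\frac{L_{f,M}}2\|x-y\|_M^2$ for all $x,y$, with $\mu_{f,M}\ge0$. *)

From HB Require Import structures.
From mathcomp Require Import all_boot all_order all_algebra.
From mathcomp Require Import all_classical all_reals all_analysis.
Set Implicit Arguments. Unset Strict Implicit. Unset Printing Implicit Defensive.
Import Order.TTheory GRing.Theory Num.Theory.
Import numFieldNormedType.Exports.
Local Open Scope ring_scope.

Definition dotv (R : realType) (n : nat) (x y : 'cV[R]_n) : R := (x^T *m y) 0 0.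

Definition spd (R : realType) (n : nat) (M : 'M[R]_n) : Prop :=
  M^T = M /\ forall x : 'cV[R]_n, x != 0 -> 0 < dotv (M *m x) x.

Definition sqnormM (R : realType) (n : nat) (M : 'M[R]_n) (x : 'cV[R]_n) : R :=
  dotv (M *m x) x.

Definition bregman (R : realType) (n : nat) (f : 'cV[R]_n -> R)
  (gradf : 'cV[R]_n -> 'cV[R]_n) (y x : 'cV[R]_n) : R :=
  f y - f x - dotv (gradf x) (y - x).

Definition S11 (R : realType) (n : nat) (M : 'M[R]_n) (mu L : R)
  (f : 'cV[R]_n -> R) (gradf : 'cV[R]_n -> 'cV[R]_n) : Prop :=
  0 <= mu /\
  forall x y : 'cV[R]_n,
    mu / 2 * sqnormM M (x - y) <= bregman f gradf y x /\
    bregman f gradf y x <= L / 2 * sqnormM M (x - y).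

Definition is_gradient (R : realType) (n : nat) (f : 'cV[R]_n -> R)
  (gradf : 'cV[R]_n -> 'cV[R]_n) : Prop :=
  forall x : 'cV[R]_n, differentiable f x /\ ('d f x : 'cV[R]_n -> R) = (fun h => dotv (gradf x) h).

(* Write g := grad f u1 - grad f u2, d := u1 - u2 and w := TU^-1 B^T (p1 - p2), so
   that v1 - v2 = d + w and ||B^T (p1 - p2)||_{TU^-1} = ||w||_TU.  The three-point
   identity for Bregman distances gives
     (grad f x - grad f y, w) = D(x + w, y) - D(x + w, x) - D(x, y),
   and the two S^{1,1} bounds turn this into
     (grad f x - grad f y, w) >= mu/2 ||x + w - y||^2 - L/2 ||w||^2 - D(x, y).
   Applying it at (u1, u2, w) and at (u2, u1, -w) and averaging replaces D(u1, u2)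
   and D(u2, u1) by half their sum, which is (g, d).  Only the two Bregman bounds
   are used. *)
From mathcomp Require Import all_boot all_order all_algebra.
From mathcomp Require Import all_classical all_reals all_analysis.
From mathcomp Require Import lra.
Set Implicit Arguments. Unset Strict Implicit. Unset Printing Implicit Defensive.
Import Order.TTheory GRing.Theory Num.Theory.
Local Open Scope ring_scope.

Section InnerProduct.
Variables (R : realType) (m : nat).
Implicit Types (x y z : 'cV[R]_m) (M : 'M[R]_m).

Lemma dotvC x y : dotv x y = dotv y x.
Proof. by rewrite /dotv -[in RHS](trmxK (y^T *m x)) [in RHS]mxE trmx_mul trmxK. Qed.

Lemma dotvBr x y z : dotv x (y - z) = dotv x y - dotv x z.
Proof. by rewrite /dotv mulmxBr [in LHS]mxE [X in _ + X]mxE. Qed.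

Lemma dotvBl x y z : dotv (x - y) z = dotv x z - dotv y z.
Proof. by rewrite ![dotv _ z]dotvC dotvBr. Qed.

Lemma dotvNr x y : dotv x (- y) = - dotv x y.
Proof. by rewrite /dotv mulmxN mxE. Qed.

Lemma dotvNl x y : dotv (- x) y = - dotv x y.
Proof. by rewrite ![dotv _ y]dotvC dotvNr. Qed.

Lemma sqnormMN M x : sqnormM M (- x) = sqnormM M x.
Proof. by rewrite /sqnormM mulmxN dotvNl dotvNr opprK. Qed.

Lemma posdef_unitmx M :
  (forall x, x != 0 -> 0 < dotv (M *m x) x) -> M \in unitmx.
Proof.
move=> Mpos; rewrite unitmxE unitfE -det_tr.
apply/negP => /det0P [v v_neq0 vMT0].
have MvT0 : M *m v^T = 0 by rewrite -[M]trmxK -trmx_mul vMT0 trmx0.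
have vT_neq0 : v^T != 0 by rewrite -(inj_eq (@trmx_inj _ _ _)) trmxK trmx0.
by have := Mpos _ vT_neq0; rewrite MvT0 /dotv trmx0 mul0mx mxE ltxx.
Qed.

Lemma sqnormM_invmx M x :
  M \in unitmx -> sqnormM (invmx M) x = sqnormM M (invmx M *m x).
Proof. by move=> Munit; rewrite /sqnormM mulmxA mulmxV // mul1mx dotvC. Qed.

End InnerProduct.

Section Bregman.
Variables (R : realType) (m : nat) (f : 'cV[R]_m -> R) (gf : 'cV[R]_m -> 'cV[R]_m).
Implicit Types (x y z w : 'cV[R]_m).

Lemma bregman_three_point x y z :
  bregman f gf y x = bregman f gf z x - bregman f gf z y - dotv (gf y - gf x) (z - y).
Proof. rewrite /bregman dotvBl !dotvBr; lra. Qed.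

Lemma bregman_sym_sum x y :
  bregman f gf x y + bregman f gf y x = dotv (gf x - gf y) (x - y).
Proof. rewrite /bregman dotvBl !dotvBr; lra. Qed.

Lemma S11_grad_dotv_ge (M : 'M[R]_m) (mu L : R) :
  S11 M mu L f gf -> forall x y w,
  mu / 2 * sqnormM M (x + w - y) - L / 2 * sqnormM M w - bregman f gf x y
    <= dotv (gf x - gf y) w.
Proof.
move=> [_ fS] x y w.
have [lower_xwy _] := fS y (x + w); have [_ upper_xwx] := fS x (x + w).
rewrite -sqnormMN opprB in lower_xwy.
rewrite opprD addNKr sqnormMN in upper_xwx.
have := bregman_three_point y x (x + w); rewrite (addrC (x + w)) addKr; lra.
Qed.

End Bregman.

Theorem lemma5p1 (R : realType) (n m : nat) (B : 'M[R]_(n, m)) (TU : 'M[R]_m)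
  (f : 'cV[R]_m -> R) (gradf : 'cV[R]_m -> 'cV[R]_m) (mu L : R) :
  spd TU ->
  is_gradient f gradf ->
  S11 TU mu L f gradf ->
  forall (u1 u2 : 'cV[R]_m) (p1 p2 : 'cV[R]_n),
    let v1 := u1 + invmx TU *m (B^T *m p1) in
    let v2 := u2 + invmx TU *m (B^T *m p2) in
    dotv (gradf u1 - gradf u2) (invmx TU *m (B^T *m (p1 - p2)))
      >= mu / 2 * sqnormM TU (v1 - v2)
         - L / 2 * sqnormM (invmx TU) (B^T *m (p1 - p2))
         - 1 / 2 * dotv (gradf u1 - gradf u2) (u1 - u2).
Proof.
move=> [_ TUpos] _ fS u1 u2 p1 p2 /=.
rewrite sqnormM_invmx ?posdef_unitmx //.
have -> : u1 + invmx TU *m (B^T *m p1) - (u2 + invmx TU *m (B^T *m p2))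
          = u1 + invmx TU *m (B^T *m (p1 - p2)) - u2.
  by rewrite !mulmxBr opprD addrACA addrAC.
move: (invmx TU *m (B^T *m (p1 - p2))) => w.
have ge12 := S11_grad_dotv_ge fS u1 u2 w.
have ge21 := S11_grad_dotv_ge fS u2 u1 (- w).
have swap_u12 : u2 - w - u1 = - (u1 + w - u2) by rewrite opprB opprD addrA addrAC.
rewrite swap_u12 -[gradf u2 - gradf u1]opprB dotvNl dotvNr opprK !sqnormMN in ge21.
have := bregman_sym_sum f gradf u1 u2; lra.
Qed.
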